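(* Let $n,r\geq1$, $\epsilon>0$, and let $t\mapsto(x_1(t),\ldots,x_r(t))$ be a continuous map $[0,\epsilon)\to(\mathbb R^n)^r$. For $I\subseteq\{1,\ldots,r\}$ and $t\in[0,\epsilon)$, let $F_I(t)$ be the convex hull of $\{x_i(t): i\in I\}$, and $P(t)=F_{\{1,\ldots,r\}}(t)$. Assume that for every $t\in(0,\epsilon)$ the points $x_i(t)$ are pairwise distinct vertices of $P(t)$, and that whenever $F_I(t)$ is a face of $P(t)$ of dimension $k$ for some $t\in(0,\epsilon)$, then $F_I(t)$ is a face of $P(t)$ of dimension $k$ for all $t\in(0,\epsilon)$. Let $I$ be such that $F(t):=F_I(t)$ is a face of $P(t)$ for all $t\in(0,\epsilon)$. Then every proper face of $F(0)$ is contained in the union of the sets $F_K(0)$, over all $K$ such that $F_K(t)$ is a proper face of $F(t)$ for $t\in(0,\epsilon)$. *)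

From HB Require Import structures.
From mathcomp Require Import all_boot all_order all_algebra.
From mathcomp Require Import all_classical all_reals all_analysis.
Set Implicit Arguments. Unset Strict Implicit. Unset Printing Implicit Defensive.
Import Order.TTheory GRing.Theory Num.Theory.
Import numFieldNormedType.Exports.
Local Open Scope classical_set_scope.
Local Open Scope ring_scope.

Definition dotv (R : realType) (n : nat) (a x : 'rV[R]_n) : R :=
  \sum_(j < n) a ord0 j * x ord0 j.

(* convex hull of the points { row i M | i in I } (rows of M = points of R^n) *)
Definition convI (R : realType) (r n : nat) (I : {set 'I_r}) (M : 'M[R]_(r, n))
  : set 'rV[R]_n :=
  [set y | exists w : 'I_r -> R,
      [/\ forall i, 0 <= w i,
          forall i, i \notin I -> w i = 0,
          \sum_(i < r) w i = 1
        & y = \sum_(i < r) w i *: row i M]].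

(* F is a face of the convex set P: F = P ∩ H for a hyperplane
   H = {x | <a,x> = b} with P ⊆ {x | <a,x> <= b}.  (a = 0 allowed, so P and
   the empty set are faces.) *)
Definition is_face (R : realType) (n : nat) (F P : set 'rV[R]_n) : Prop :=
  exists (a : 'rV[R]_n) (b : R),
    (forall x, P x -> dotv a x <= b) /\
    F = P `&` [set x | dotv a x = b].

Definition is_proper_face (R : realType) (n : nat) (F P : set 'rV[R]_n) : Prop :=
  is_face F P /\ F <> P.

Definition is_vertex (R : realType) (n : nat) (v : 'rV[R]_n) (P : set 'rV[R]_n) : Prop :=
  is_face [set v] P.

Definition aff_indep (R : realType) (n k : nat) (p : 'I_k.+1 -> 'rV[R]_n) : bool :=
  row_free (\matrix_(i < k) (p (lift ord0 i) - p ord0)).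

Definition has_dim (R : realType) (n : nat) (S : set 'rV[R]_n) (k : nat) : Prop :=
  (exists p : 'I_k.+1 -> 'rV[R]_n, (forall i, S (p i)) /\ aff_indep p) /\
  ~ (exists p : 'I_k.+2 -> 'rV[R]_n, (forall i, S (p i)) /\ aff_indep p).

From HB Require Import structures.
From mathcomp Require Import all_boot all_order all_algebra.
From mathcomp Require Import all_classical all_reals all_analysis.
From mathcomp Require Import ring lra.
Import Order.TTheory GRing.Theory Num.Theory.
Import numFieldNormedType.Exports.
Local Open Scope classical_set_scope.
Local Open Scope ring_scope.
Set Implicit Arguments. Unset Strict Implicit. Unset Printing Implicit Defensive.

(* Write the proper face G of F(0) as F(0) ∩ {a.w = b}, take y in G and v in F(0)
   with a.v < b. For small t, move y and v to nearby points y', v' of F(t) and push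
   y' a little beyond F(t), away from v': the point z = y' + th (y' - v') leaves F(t)
   because a.z > b, yet stays close to y. The Euclidean projection p of z onto F(t)
   lies on the face of F(t) cut out by the hyperplane through p orthogonal to z - p;
   that face is F_K(t) for a proper subset K of I, it is a face of P(t), so by the
   stability hypothesis it is a proper face of F(s) for every s, and F_K(0) passes
   close to y. Hence y lies in the closure of the finite union of the compact sets
   F_K(0), i.e. in the union itself. *)

Section InnerProduct.
Variables (R : realType) (n : nat).
Implicit Types (a b u v : 'rV[R]_n).

Lemma dotvDl a b u : dotv (a + b) u = dotv a u + dotv b u.
Proof. by rewrite /dotv -big_split; apply: eq_bigr => j _; rewrite mxE mulrDl. Qed.

Lemma dotvZl k a u : dotv (k *: a) u = k * dotv a u.
Proof. by rewrite /dotv mulr_sumr; apply: eq_bigr => j _; rewrite mxE mulrA. Qed.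

Lemma dotvDr a u v : dotv a (u + v) = dotv a u + dotv a v.
Proof. by rewrite /dotv -big_split; apply: eq_bigr => j _; rewrite mxE mulrDr. Qed.

Lemma dotvZr k a u : dotv a (k *: u) = k * dotv a u.
Proof. by rewrite /dotv mulr_sumr; apply: eq_bigr => j _; rewrite mxE mulrCA. Qed.

Lemma dotvBr a u v : dotv a (u - v) = dotv a u - dotv a v.
Proof. by rewrite /dotv -sumrB; apply: eq_bigr => j _; rewrite !mxE mulrBr. Qed.

Lemma dotv_sumr (m : nat) a (w : 'I_m -> R) (u : 'I_m -> 'rV[R]_n) :
  dotv a (\sum_i w i *: u i) = \sum_i w i * dotv a (u i).
Proof.
rewrite /dotv; under eq_bigr do rewrite summxE mulr_sumr.
rewrite exchange_big; apply: eq_bigr => i _; rewrite mulr_sumr.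
by apply: eq_bigr => j _; rewrite !mxE mulrCA.
Qed.

Lemma dotv_expand a b (s : R) :
  dotv (a - s *: b) (a - s *: b) = dotv a a - 2 * s * dotv a b + s ^+ 2 * dotv b b.
Proof.
rewrite /dotv mulr_sumr [s ^+ 2 * _]mulr_sumr -sumrB -big_split /=.
by apply: eq_bigr => j _; rewrite !mxE; ring.
Qed.

Lemma sqr_coord_le_dotv u j : u ord0 j ^+ 2 <= dotv u u.
Proof.
rewrite /dotv (bigD1 j) //= -expr2 lerDl.
by apply: sumr_ge0 => k _; rewrite -expr2 sqr_ge0.
Qed.

Lemma dotv_ge0 u : 0 <= dotv u u.
Proof. by apply: sumr_ge0 => j _; rewrite -expr2 sqr_ge0. Qed.

Lemma dotv_eq0 u : dotv u u = 0 -> u = 0.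
Proof.
move=> u0; apply/rowP => j; rewrite mxE.
by apply/eqP; rewrite -sqrf_eq0 eq_le sqr_ge0 andbT -u0 sqr_coord_le_dotv.
Qed.

Lemma nearest_obtuse (C : set 'rV[R]_n) z p :
  (forall v s, C v -> 0 <= s <= 1 -> C (p + s *: (v - p))) ->
  (forall v, C v -> dotv (z - p) (z - p) <= dotv (z - v) (z - v)) ->
  forall v, C v -> dotv (z - p) (v - p) <= 0.
Proof.
move=> Cseg pmin v Cv; rewrite leNgt; apply/negP => A_gt0.
set A := dotv (z - p) (v - p) in A_gt0.
set B := dotv (v - p) (v - p).
have B_ge0 : 0 <= B by exact: dotv_ge0.
have AB_gt0 : 0 < A + B by rewrite ltr_pwDl.
set s := A / (A + B).
have s_gt0 : 0 < s by rewrite divr_gt0.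
have s_le1 : s <= 1 by rewrite ler_pdivrMr // mul1r lerDl.
have sB_le : s * B <= A by rewrite /s mulrAC ler_pdivrMr // ler_pM2l // lerDr ltW.
have s01 : 0 <= s <= 1 by rewrite s_le1 ltW.
have := pmin _ (Cseg v s Cv s01).
rewrite opprD addrA dotv_expand -/A -/B.
(* minimality at [p + s (v - p)] gives [2 s A <= s^2 B], and [s B <= A] by the choice of [s] *)
nra.
Qed.

End InnerProduct.

Section ConvexHull.
Variables (R : realType) (n r : nat).
Implicit Types (M : 'M[R]_(r, n)) (J K : {set 'I_r}) (a u v : 'rV[R]_n).

Lemma convI_row J M i : i \in J -> convI J M (row i M).
Proof.
move=> iJ; exists (fun k => (k == i)%:R); split.
- by move=> k; rewrite ler0n.
- by move=> k; apply: contraNeq => /[!pnatr_eq0] /[!eqb0] /[!negbK] /eqP ->.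
- by rewrite (bigD1 i) //= eqxx big1 ?addr0 // => k /negbTE ->.
- by rewrite (bigD1 i) //= eqxx scale1r big1 ?addr0 // => k /negbTE ->; rewrite scale0r.
Qed.

Lemma convI_sub J K M : J \subset K -> convI J M `<=` convI K M.
Proof.
move=> sJK v [w [w_ge0 wJ w1 ->]]; exists w; split => // i iK.
by apply: wJ; apply: contra iK => /(fintype.subsetP sJK).
Qed.

Lemma convI0 M : convI finset.set0 M = set0.
Proof.
apply/seteqP; split => // v [w [_ w0 w1 _]]; move: w1.
by rewrite big1 => [/eqP|i _]; [rewrite eq_sym oner_eq0 | rewrite w0 ?inE].
Qed.

Lemma convI_convex J M u v (s : R) : 0 <= s <= 1 ->
  convI J M u -> convI J M v -> convI J M (u + s *: (v - u)).
Proof.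
move=> /andP[s_ge0 s_le1] [w [w_ge0 wJ w1 ->]] [w' [w'_ge0 w'J w'1 ->]].
exists (fun i => (1 - s) * w i + s * w' i); split.
- by move=> i; rewrite addr_ge0 // mulr_ge0 // subr_ge0.
- by move=> i iJ; rewrite wJ // w'J // !mulr0 addr0.
- by rewrite big_split /= -!mulr_sumr w1 w'1 !mulr1 subrK.
rewrite scalerBr !scaler_sumr -sumrB -big_split /=; apply: eq_bigr => i _.
by rewrite !scalerA scalerDl mulrBl mul1r scalerBl addrAC addrA.
Qed.

Lemma convI_dotv_le J M a (b : R) :
  (forall i, i \in J -> dotv a (row i M) <= b) ->
  forall v, convI J M v -> dotv a v <= b.
Proof.
move=> Jb v [w [w_ge0 wJ w1 ->]]; rewrite dotv_sumr -[b]mul1r -w1 mulr_suml.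
apply: ler_sum => i _; have [iJ|iJ] := boolP (i \in J).
  by rewrite ler_wpM2l ?Jb.
by rewrite wJ // !mul0r.
Qed.

Lemma convI_setI_hyperplane J M a (b : R) :
  (forall i, i \in J -> dotv a (row i M) <= b) ->
  convI [set i in J | dotv a (row i M) == b] M = convI J M `&` [set v | dotv a v = b].
Proof.
move=> Jb; apply/seteqP; split => v.
  move=> [w [w_ge0 wJ w1 vE]]; split.
    by exists w; split => // i iJ; apply: wJ; rewrite inE negb_and iJ.
  rewrite /= vE dotv_sumr -[b]mul1r -w1 mulr_suml; apply: eq_bigr => i _.
  have [|iK] := boolP (i \in [set i in J | dotv a (row i M) == b]).
    by rewrite inE => /andP[_ /eqP ->].
  by rewrite wJ // !mul0r.
move=> [[w [w_ge0 wJ w1 vE]] /= vb]; exists w; split => // i.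
(* the slacks [w i * (b - a.row i)] are nonnegative and sum to [b - a.v = 0] *)
have slack_ge0 k : 0 <= w k * (b - dotv a (row k M)).
  have [kJ|kJ] := boolP (k \in J); last by rewrite wJ // mul0r.
  by rewrite mulr_ge0 // subr_ge0 Jb.
have /eqP : \sum_k w k * (b - dotv a (row k M)) = 0.
  under eq_bigr do rewrite mulrBr.
  by rewrite sumrB -mulr_suml w1 mul1r -dotv_sumr -vE vb subrr.
rewrite psumr_eq0 => [/allP/(_ i (mem_index_enum _))|k _]; last exact: slack_ge0.
rewrite mulf_eq0 subr_eq0 inE negb_and => /orP[/eqP //|/eqP ib].
by rewrite ib eqxx orbF => /wJ.
Qed.

Definition simplex J : set 'rV[R]_r :=
  [set q | [/\ forall i, 0 <= q ord0 i, forall i, i \notin J -> q ord0 i = 0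
             & \sum_i q ord0 i = 1]].

Lemma simplex_compact J : compact (simplex J).
Proof.
have coord_cont i : continuous (fun q : 'rV[R]_r => q ord0 i) by exact: coord_continuous.
have simplexE : simplex J = (\bigcap_i [set q | 0 <= q ord0 i]) `&`
    (\bigcap_(i in [set i | i \notin J]) [set q | q ord0 i = 0]) `&`
    [set q | \sum_i q ord0 i = 1].
  apply/seteqP; split => q [].
    by move=> q_ge0 qJ q1; split=> //; split=> // i _; exact: q_ge0.
  by move=> [q_ge0 qJ] q1; split => // i; exact: q_ge0.
have simplex_closed : closed (simplex J).
  rewrite simplexE; apply: closedI; first apply: closedI.
  - apply: closed_bigI => i _.
    exact: (preimage_closed (fun q _ => coord_cont i q) (@closed_ge _ 0)).
  - apply: closed_bigI => i _.
    exact: (preimage_closed (fun q _ => coord_cont i q) (@closed_eq _ 0)).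
  - apply: (preimage_closed _ (@closed_eq _ 1)) => q _.
    by apply: continuous_big => //; exact: add_continuous.
apply: (subclosed_compact simplex_closed
  (@rV_compact _ r (fun _ => `[(0 : R), 1]%classic) (fun _ => @segment_compact _ 0 1))).
move=> q [q_ge0 _ q1] i /=; rewrite in_itv /= q_ge0 /= -q1.
by rewrite (bigD1 i) //= lerDl sumr_ge0.
Qed.

Lemma convI_compact J M : compact (convI J M).
Proof.
pose comb (q : 'rV[R]_r) := \sum_i q ord0 i *: row i M.
have -> : convI J M = comb @` simplex J.
  apply/seteqP; split => v.
    move=> [w [w_ge0 wJ w1 ->]]; exists (\row_i w i).
      by split => [i|i /wJ|]; rewrite ?mxE //; under eq_bigr do rewrite mxE.
    by apply: eq_bigr => i _; rewrite mxE.
  by move=> [q [q_ge0 qJ q1] <-]; exists (fun i => q ord0 i).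
apply: continuous_compact; last exact: simplex_compact.
apply: continuous_subspaceT; apply: continuous_big => // [|i _].
  exact: add_continuous.
by move=> q'; apply: continuousZr_tmp; exact: coord_continuous.
Qed.

Lemma convI_nearest J M z u : convI J M u ->
  exists2 p, convI J M p &
    forall v, convI J M v -> dotv (z - p) (z - p) <= dotv (z - v) (z - v).
Proof.
move=> Ju; have coord_cont j : continuous (fun v : 'rV[R]_n => (z - v) ord0 j).
  have -> : (fun v : 'rV[R]_n => (z - v) ord0 j) = (fun v => z ord0 j - v ord0 j).
    by apply/funext => v; rewrite !mxE.
  move=> v; apply: (@continuousB _ R^o _ (fun=> z ord0 j) (fun v => v ord0 j)).
    exact: cst_continuous.
  exact: coord_continuous.
have dist_cont : continuous (fun v => dotv (z - v) (z - v)).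
  apply: continuous_big => // [|j _ v]; first exact: add_continuous.
  exact: (@continuousM _ _ (fun v => (z - v) ord0 j) (fun v => (z - v) ord0 j) v
    (coord_cont j v) (coord_cont j v)).
have [p /set_mem Jp pmin] := EVT_min_rV (ex_intro _ u Ju) (@convI_compact J M)
  (continuous_subspaceT dist_cont).
by exists p => // v Jv; apply: pmin; rewrite inE.
Qed.

End ConvexHull.

Section Faces.
Variables (R : realType) (n r : nat).
Implicit Types (M : 'M[R]_(r, n)) (I J K : {set 'I_r}) (a c u v : 'rV[R]_n).
Local Notation polytope M := (convI [set: 'I_r]%SET M).

Lemma is_face_sub (A B P : set 'rV[R]_n) : is_face A P -> A `<=` B -> B `<=` P -> is_face A B.
Proof.
move=> [a [b [Pb ->]]] AB BP; exists a, b; split=> [v /BP/Pb //|].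
by apply/seteqP; split=> v; [move=> Av; split; [exact: AB | case: Av] | move=> [/BP]].
Qed.

Lemma has_dim_exists (S : set 'rV[R]_n) v : S v -> exists k, has_dim S k.
Proof.
move=> Sv; pose indep k := exists p : 'I_k.+1 -> 'rV[R]_n, (forall i, S (p i)) /\ aff_indep p.
have indep0 : indep 0%N.
  by exists (fun=> v); split => //; rewrite /aff_indep /row_free -leqn0 rank_leq_row.
have indep_le k : indep k -> (k <= n)%N.
  by move=> [p [_ /eqP <-]]; exact: rank_leq_col.
apply: contrapT => no_dim.
have indepS k : indep k -> indep k.+1.
  by move=> indep_k; apply: contrapT => ?; apply: no_dim; exists k.
have : indep n.+1 by elim: n.+1 => // k; exact: indepS.
by move/indep_le; rewrite ltnn.
Qed.

Section Vertices.
Variable M : 'M[R]_(r, n).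
Hypothesis rows_inj : injective (fun i : 'I_r => row i M).
Hypothesis rows_vertex : forall i, is_vertex (row i M) (polytope M).

Lemma convI_row_notin J i : i \notin J -> ~ convI J M (row i M).
Proof.
move=> iJ Ji; have [a [b [Pb vertex_i]]] := rows_vertex i.
have row_on_face k : dotv a (row k M) = b -> k = i.
  move=> kb; apply: rows_inj.
  have : (polytope M `&` [set v | dotv a v = b]) (row k M) by split=> //; exact: convI_row.
  by rewrite -vertex_i.
have Jb k : k \in J -> dotv a (row k M) <= b by move=> _; apply: Pb; exact: convI_row.
have ib : dotv a (row i M) = b.
  have : [set row i M] (row i M) by [].
  by rewrite vertex_i => -[].
have : convI [set k in J | dotv a (row k M) == b] M (row i M).
  by rewrite convI_setI_hyperplane.
suff -> : [set k in J | dotv a (row k M) == b] = finset.set0 by rewrite convI0.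
apply/setP => k; rewrite !inE; apply/andP => -[kJ /eqP /row_on_face ki].
by move: iJ; rewrite -ki kJ.
Qed.

Lemma convI_subface_is_face I c (be : R) :
  is_face (convI I M) (polytope M) ->
  (forall i, i \in I -> dotv c (row i M) <= be) ->
  is_face (convI [set i in I | dotv c (row i M) == be] M) (polytope M).
Proof.
move=> [a [b [Pb faceI]]] Ibe.
have on_face i : i \in I -> dotv a (row i M) = b.
  by move=> iI; have := convI_row M iI; rewrite faceI => -[].
have off_face i : i \notin I -> 0 < b - dotv a (row i M).
  move=> iI; rewrite subr_gt0 lt_neqAle Pb ?andbT; last by apply: convI_row; rewrite inE.
  apply/eqP => ib; apply: (convI_row_notin iI); rewrite faceI.
  by split=> //; apply: convI_row; rewrite inE.
(* tilt the hyperplane [c = be] around the face of [I] until it supports the whole polytope *)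
pose L := 1 + \sum_(i | i \notin I) `|dotv c (row i M) - be| / (b - dotv a (row i M)).
have L_big i : i \notin I -> `|dotv c (row i M) - be| < L * (b - dotv a (row i M)).
  move=> iI; rewrite -ltr_pdivrMr ?off_face // /L (bigD1 i) //=.
  suff : 0 <= \sum_(k | (k \notin I) && (k != i))
    `|dotv c (row k M) - be| / (b - dotv a (row k M)) by lra.
  by apply: sumr_ge0 => k /andP[/off_face k_gt0 _]; rewrite divr_ge0 // ltW.
pose f := c + L *: a; pose lev := be + L * b.
have slackE i : lev - dotv f (row i M) = (be - dotv c (row i M)) + L * (b - dotv a (row i M)).
  by rewrite /f /lev dotvDl dotvZl; ring.
have slack_ge0 i : 0 <= lev - dotv f (row i M).
  rewrite slackE; have [iI|iI] := boolP (i \in I).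
    by rewrite on_face // subrr mulr0 addr0 subr_ge0 Ibe.
  by have := L_big i iI; have := ler_norm (dotv c (row i M) - be); lra.
have slack_eq0 i : (dotv f (row i M) == lev) = (i \in [set i in I | dotv c (row i M) == be]).
  rewrite inE eq_sym -subr_eq0 slackE; have [iI|iI] /= := boolP (i \in I).
    by rewrite on_face // subrr mulr0 addr0 subr_eq0.
  apply/negbTE; rewrite gt_eqF //.
  by have := L_big i iI; have := ler_norm (dotv c (row i M) - be); lra.
have Plev i : i \in [set: 'I_r]%SET -> dotv f (row i M) <= lev by rewrite -subr_ge0.
exists f, lev; split; first exact: convI_dotv_le Plev.
rewrite -convI_setI_hyperplane //; congr convI; apply/setP => i.
by rewrite -slack_eq0 !inE.
Qed.

Lemma exists_proper_subface_near I u v (th : R) :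
  is_face (convI I M) (polytope M) ->
  convI I M u -> convI I M v -> ~ convI I M (u + th *: (u - v)) ->
  exists2 K : {set 'I_r}, K \proper I /\ is_face (convI K M) (polytope M) &
    exists2 p, convI K M p &
      dotv (u + th *: (u - v) - p) (u + th *: (u - v) - p) <=
      dotv (u + th *: (u - v) - u) (u + th *: (u - v) - u).
Proof.
set z := u + th *: (u - v) => faceI Iu Iv z_out.
have [p Ip pmin] := convI_nearest z Iu.
pose c := z - p.
have Ic i : i \in I -> dotv c (row i M) <= dotv c p.
  move=> iI; rewrite -subr_le0 -dotvBr.
  apply: nearest_obtuse pmin _ (convI_row M iI) => w s Iw s01.
  exact: convI_convex.
pose K := [set i in I | dotv c (row i M) == dotv c p].
have KI : K \subset I by apply/fintype.subsetP => i; rewrite inE => /andP[].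
have KE : convI K M = convI I M `&` [set w | dotv c w = dotv c p].
  exact: convI_setI_hyperplane.
exists K; last by exists p; [rewrite KE | exact: pmin].
split; last exact: convI_subface_is_face.
rewrite finset.properEneq KI andbT; apply/eqP => KeqI.
(* otherwise [u] and [v], hence [z], lie on the hyperplane [c = c.p] through [p] *)
have on_hyp w : convI I M w -> dotv c w = dotv c p by rewrite -KeqI KE => -[].
have : dotv c (z - p) = 0.
  rewrite dotvBr /z dotvDr dotvZr dotvBr (on_hyp u Iu) (on_hyp v Iv).
  by rewrite subrr mulr0 addr0 subrr.
by move/dotv_eq0/eqP; rewrite subr_eq0 => /eqP zp; apply: z_out; rewrite -/z zp.
Qed.

End Vertices.

End Faces.

Section SupNorm.
Variable (R : realType).

Lemma normr_mxE m n (A : 'M[R]_(m, n)) : `|A| = \big[Num.max/0]_ij `|A ij.1 ij.2|.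
Proof. exact: mx_normrE. Qed.

Lemma mx_norm_coord_le m n (A : 'M[R]_(m, n)) i j : `|A i j| <= `|A|.
Proof. by rewrite normr_mxE; exact: (le_bigmax _ _ (i, j)). Qed.

Lemma mx_norm_le m n (A : 'M[R]_(m, n)) (c : R) :
  0 <= c -> (forall i j, `|A i j| <= c) -> `|A| <= c.
Proof.
by move=> c_ge0 Ac; rewrite normr_mxE; apply: bigmax_le => // -[i j].
Qed.

Lemma row_norm_le m n (A : 'M[R]_(m, n)) i : `|row i A| <= `|A|.
Proof. by apply: mx_norm_le => // k j; rewrite mxE; exact: mx_norm_coord_le. Qed.

Variables (n r : nat).
Implicit Types (a u v : 'rV[R]_n).

Lemma convI_shadow (J : {set 'I_r}) (M M' : 'M[R]_(r, n)) v : convI J M v ->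
  exists2 v', convI J M' v' & `|v - v'| <= `|M - M'|.
Proof.
move=> [w [w_ge0 wJ w1 ->]]; exists (\sum_i w i *: row i M'); first by exists w.
rewrite -sumrB; under eq_bigr do rewrite -scalerBr -linearB.
apply: le_trans (ler_norm_sum _ _ _) _; rewrite -[leRHS]mul1r -w1 mulr_suml.
by apply: ler_sum => i _; rewrite normrZ ger0_norm // ler_wpM2l // row_norm_le.
Qed.

Lemma dotv_lipschitz a u v :
  `|dotv a u - dotv a v| <= (\sum_j `|a ord0 j|) * `|u - v|.
Proof.
rewrite -dotvBr mulr_suml; apply: le_trans (ler_norm_sum _ _ _) _.
by apply: ler_sum => j _; rewrite normrM ler_wpM2l // mx_norm_coord_le.
Qed.

Lemma dotv_le_norm v : dotv v v <= n%:R * `|v| ^+ 2.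
Proof.
have -> : n%:R * `|v| ^+ 2 = \sum_(j < n) `|v| ^+ 2.
  by rewrite sumr_const card_ord mulr_natl.
apply: ler_sum => j _; rewrite -expr2 -real_normK ?num_real //.
by rewrite lerXn2r ?nnegrE // mx_norm_coord_le.
Qed.

Lemma norm_le_dotv u v : dotv u u <= dotv v v -> `|u| <= n%:R * `|v|.
Proof.
move=> uv; apply: mx_norm_le => [|i j]; first by rewrite mulr_ge0.
have n_ge1 : 1 <= n%:R :> R by rewrite ler1n (leq_ltn_trans _ (ltn_ord j)).
have : `|u i j| ^+ 2 <= (n%:R * `|v|) ^+ 2.
  rewrite real_normK ?num_real // (ord1 i) exprMn.
  apply: le_trans (sqr_coord_le_dotv u j) _; apply: le_trans uv _.
  by apply: le_trans (dotv_le_norm v) _; rewrite ler_wpM2r // expr2 ler_peMr.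
by rewrite ler_sqr // nnegrE mulr_ge0.
Qed.

Lemma extrapolation_shadow_dist (y v y' v' p q : 'rV[R]_n) (th e : R) :
  0 < th -> e <= 1 -> `|y - y'| <= e -> `|v - v'| <= e -> `|p - q| <= e ->
  dotv (y' + th *: (y' - v') - p) (y' + th *: (y' - v') - p) <=
    dotv (y' + th *: (y' - v') - y') (y' + th *: (y' - v') - y') ->
  `|y - q| <= 2 * e + (n%:R + 1) * th * (`|y - v| + 2).
Proof.
move=> th_gt0 e_le1 yy' vv' pq.
have zy' : y' + th *: (y' - v') - y' = th *: (y' - v') by rewrite addrAC subrr add0r.
move=> /norm_le_dotv; rewrite zy' normrZ gtr0_norm //.
move: (y' + th *: (y' - v')) zy' => z zy' zp.
have y'v' : `|y' - v'| <= `|y - v| + 2.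
  have -> : y' - v' = (y' - y) + (y - v) + (v - v') by rewrite !addrA !subrK.
  apply: le_trans (ler_normD _ _) _; apply: le_trans (lerD (ler_normD _ _) (lexx _)) _.
  by rewrite distrC in yy'; lra.
have -> : y - q = (y - y') + (y' - z) + (z - p) + (p - q) by rewrite !addrA !subrK.
apply: le_trans (ler_normD _ _) _; apply: le_trans (lerD (ler_normD _ _) (lexx _)) _.
apply: le_trans (lerD (lerD (ler_normD _ _) (lexx _)) (lexx _)) _.
rewrite [`|y' - z|]distrC zy' normrZ gtr0_norm //.
have th_y'v' : th * `|y' - v'| <= th * (`|y - v| + 2) by rewrite ler_pM2l.
have : n%:R * (th * `|y' - v'|) <= n%:R * (th * (`|y - v| + 2)) by rewrite ler_wpM2l.
lra.
Qed.

End SupNorm.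

Lemma div_add_bounds (R : realFieldType) (u c : R) : 0 < u -> 0 <= c ->
  [/\ 0 < u / (u + c), u / (u + c) <= 1 & u / (u + c) * c < u].
Proof.
move=> u_gt0 c_ge0; have uc_gt0 : 0 < u + c by rewrite ltr_wpDr.
rewrite divr_gt0 // ler_pdivrMr // mul1r lerDl c_ge0 mulrAC ltr_pdivrMr //.
by rewrite ltr_pM2l // ltr_pwDl.
Qed.

Lemma continuous_within_near0 (R : realType) (V : normedModType R) (f : R -> V) (eps : R) :
  0 < eps -> {within `[0, eps[, continuous f} ->
  forall e, 0 < e -> exists2 t, 0 < t < eps & `|f t - f 0| < e.
Proof.
move=> eps_gt0 f_cont e e_gt0.
have dom0 : `[0, eps[%classic (0 : R) by rewrite /= in_itv /= lexx eps_gt0.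
have := (proj1 (subspace_continuousP _ _) f_cont) 0 dom0 => /cvgr_dist_lt /(_ e e_gt0).
rewrite near_withinE => /nbhs_ballP [d d_gt0 near0].
have m_gt0 : 0 < Num.min d eps by rewrite lt_min d_gt0 eps_gt0.
have m_le_d : Num.min d eps <= d by rewrite ge_min lexx.
have m_le_eps : Num.min d eps <= eps by rewrite ge_min lexx orbT.
pose t := Num.min d eps / 2.
have [t_gt0 t_lt_d t_lt_eps] : [/\ 0 < t, t < d & t < eps] by rewrite /t; split; lra.
exists t; first by rewrite t_gt0.
have := near0 t; rewrite /ball /= sub0r normrN ger0_norm ?ltW // => /(_ t_lt_d).
rewrite in_itv /= ltW //= t_lt_eps => /(_ isT) near_t.
by rewrite distrC.
Qed.

Lemma extrapolation_leaves_convI (R : realType) (n r : nat) (J : {set 'I_r})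
    (M0 M : 'M[R]_(r, n)) (a y v y' v' : 'rV[R]_n) (b th e : R) :
  (forall w, convI J M0 w -> dotv a w <= b) -> dotv a y = b ->
  `|M0 - M| <= e -> `|y - y'| <= e -> `|v - v'| <= e -> 0 < th <= 1 ->
  4 * (\sum_j `|a ord0 j|) * e < th * (b - dotv a v) ->
  ~ convI J M (y' + th *: (y' - v')).
Proof.
set A := \sum_j _ => J0b yb M0M yy' vv' /andP[th_gt0 th_le1] small_e Jz.
have [z0 J0z0 zz0] := convI_shadow M0 Jz.
have A_ge0 : 0 <= A by rewrite sumr_ge0.
have lip (u u0 : 'rV[R]_n) : `|u - u0| <= e -> `|dotv a u - dotv a u0| <= A * e.
  by move=> uu0; apply: le_trans (dotv_lipschitz a u u0) _; rewrite ler_wpM2l.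
have MM0 : `|M - M0| <= e by rewrite distrC.
have := lip _ _ (le_trans zz0 MM0); have := lip _ _ yy'; have := lip _ _ vv'.
rewrite dotvDr dotvZr dotvBr yb; have := J0b _ J0z0.
move=> az_le /ler_normlP[hv _] /ler_normlP[_ hy] /ler_normlP[_ hz].
(* [a.z] exceeds [b] by about [th * (b - a.v)], while all of [conv_J M] stays below [b + A e] *)
have thAe : th * (A * e) <= A * e by rewrite ler_piMl // mulr_ge0 // (le_trans _ M0M).
have thy : th * (b - dotv a y') <= th * (A * e) by rewrite ler_pM2l.
have thv : th * (dotv a v' - dotv a v) <= th * (A * e) by rewrite ler_pM2l // -opprB.
lra.
Qed.

Section Deformation.
Variables (R : realType) (n r : nat) (eps : R) (x : R -> 'M[R]_(r, n)) (I : {set 'I_r}).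
Local Notation polytope M := (convI [set: 'I_r]%SET M).

Hypothesis eps_gt0 : 0 < eps.
Hypothesis x_cont : {within `[0, eps[, continuous x}.
Hypothesis rows_vertices : forall t, 0 < t < eps ->
  injective (fun i : 'I_r => row i (x t)) /\
  (forall i, is_vertex (row i (x t)) (polytope (x t))).
Hypothesis faces_stable : forall (J : {set 'I_r}) (k : nat) (t : R), 0 < t < eps ->
  is_face (convI J (x t)) (polytope (x t)) -> has_dim (convI J (x t)) k ->
  forall s, 0 < s < eps -> is_face (convI J (x s)) (polytope (x s)) /\ has_dim (convI J (x s)) k.
Hypothesis I_face : forall t, 0 < t < eps -> is_face (convI I (x t)) (polytope (x t)).

Definition proper_subface_index (K : {set 'I_r}) : Prop :=
  forall t, 0 < t < eps -> is_proper_face (convI K (x t)) (convI I (x t)).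

Lemma proper_subface_index_at (K : {set 'I_r}) t p : K \proper I -> 0 < t < eps ->
  is_face (convI K (x t)) (polytope (x t)) -> convI K (x t) p -> proper_subface_index K.
Proof.
move=> /fintype.properP[KI [i iI iK]] t_in faceK Kp s s_in.
have [k dimK] := has_dim_exists Kp.
have [faceKs _] := faces_stable t_in faceK dimK s_in.
have [rows_inj rows_vertex] := rows_vertices s_in.
split; first by apply: is_face_sub faceKs (convI_sub KI) (convI_sub (finset.subsetT I)).
move=> KeqI; apply: (convI_row_notin rows_inj rows_vertex iK).
by rewrite KeqI; exact: convI_row.
Qed.

Lemma approx_by_proper_subfaces a b y v : (forall w, convI I (x 0) w -> dotv a w <= b) ->
  convI I (x 0) y -> dotv a y = b -> convI I (x 0) v -> dotv a v < b ->
  forall d, 0 < d ->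
  exists K, proper_subface_index K /\ exists2 q, convI K (x 0) q & `|y - q| < d.
Proof.
move=> F0b F0y yb F0v vb d d_gt0.
set A := \sum_j `|a ord0 j|; set D := `|y - v| + 2; set C := 2 + (n%:R + 1) * D.
have A4_ge0 : 0 <= 4 * A by rewrite mulr_ge0 // sumr_ge0.
have D_ge0 : 0 <= D by rewrite addr_ge0.
have C_ge0 : 0 <= C by rewrite addr_ge0 // mulr_ge0 // addr_ge0.
have gap_gt0 : 0 < b - dotv a v by rewrite subr_gt0.
have [th_gt0 th_le1 thC] := div_add_bounds d_gt0 C_ge0.
set th := d / (d + C) in th_gt0 th_le1 thC.
have [f_gt0 f_le1 fA] := div_add_bounds gap_gt0 A4_ge0.
set e := th * ((b - dotv a v) / (b - dotv a v + 4 * A)).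
have e_gt0 : 0 < e by rewrite mulr_gt0.
have e_le_th : e <= th by rewrite ler_piMr // ltW.
have small_e : 4 * A * e < th * (b - dotv a v).
  by rewrite mulrC -mulrA ltr_pM2l // mulrC.
have [t t_in xt_x0] := continuous_within_near0 eps_gt0 x_cont e_gt0.
have [rows_inj rows_vertex] := rows_vertices t_in.
have x0_xt : `|x 0 - x t| <= e by rewrite distrC ltW.
have [y' Fy' yy'] := convI_shadow (x t) F0y.
have [v' Fv' vv'] := convI_shadow (x t) F0v.
have z_out : ~ convI I (x t) (y' + th *: (y' - v')).
  apply: (extrapolation_leaves_convI F0b yb x0_xt _ _ _ small_e).
  - exact: le_trans yy' x0_xt.
  - exact: le_trans vv' x0_xt.
  - by rewrite th_gt0.
have [K [KI faceK] [p Kp zp]] :=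
  exists_proper_subface_near rows_inj rows_vertex (I_face t_in) Fy' Fv' z_out.
have [q Kq pq] := convI_shadow (x 0) Kp.
exists K; split; first exact: proper_subface_index_at KI t_in faceK Kp.
exists q => //; apply: le_lt_trans (extrapolation_shadow_dist _ _ _ _ _ zp) _.
- exact: th_gt0.
- exact: le_trans e_le_th th_le1.
- exact: le_trans yy' x0_xt.
- exact: le_trans vv' x0_xt.
- exact: le_trans pq (ltW xt_x0).
by move: thC; rewrite /C /D; lra.
Qed.

End Deformation.

Theorem lemma6p1 (R : realType) (n r : nat) (eps : R) (x : R -> 'M[R]_(r, n))
  (I : {set 'I_r}) :
  (1 <= n)%N -> (1 <= r)%N -> 0 < eps ->
  {within `[0, eps[, continuous x} ->
  (forall t, 0 < t < eps ->
     injective (fun i : 'I_r => row i (x t)) /\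
     (forall i, is_vertex (row i (x t)) (convI [set: 'I_r]%SET (x t)))) ->
  (forall (J : {set 'I_r}) (k : nat) (t : R), 0 < t < eps ->
     is_face (convI J (x t)) (convI [set: 'I_r]%SET (x t)) -> has_dim (convI J (x t)) k ->
     forall s, 0 < s < eps ->
       is_face (convI J (x s)) (convI [set: 'I_r]%SET (x s)) /\ has_dim (convI J (x s)) k) ->
  (forall t, 0 < t < eps -> is_face (convI I (x t)) (convI [set: 'I_r]%SET (x t))) ->
  forall G : set 'rV[R]_n,
    is_proper_face G (convI I (x 0)) ->
    G `<=` \bigcup_(K in [set K : {set 'I_r} | forall t, 0 < t < eps ->
                            is_proper_face (convI K (x t)) (convI I (x t))])
             convI K (x 0).
Proof.
move=> _ _ eps_gt0 x_cont rows_vertices faces_stable I_face G [[a [b [F0b ->]]] G_neq].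
move=> y [F0y yb].
have [v F0v vb] : exists2 v, convI I (x 0) v & dotv a v < b.
  apply: contrapT => all_on_G; apply: G_neq; apply/seteqP; split=> [w [] //|w F0w].
  split=> //; apply/eqP; rewrite eq_le F0b //= leNgt; apply/negP => wb.
  by apply: all_on_G; exists w.
set U := \bigcup_(K in _) _.
have U_closed : closed U.
  apply: closed_bigcup => [|K _]; first exact: finite_finset.
  apply: compact_closed; [exact: norm_hausdorff | exact: convI_compact].
rewrite (closure_id U).1 // => B /nbhs_ballP[d d_gt0 yB].
have [K [K_proper [q Kq yq]]] := approx_by_proper_subfaces eps_gt0 x_cont rows_vertices
  faces_stable I_face F0b F0y yb F0v vb d_gt0.
by exists q; split; [exists K | apply: yB; rewrite -ball_normE].
Qed.
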